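(* Let $(P,\leqslant)$ be a locally finite poset having a minimum element $\hat{0}$, and suppose $P$ has the Möbius uncertainty property, i.e. whenever $f,g:P\to\mathbb{C}$ are functions, neither identically zero, with $g(z)=\sum_{x\leqslant z} f(x)$ for all $z\in P$, at least one of $\operatorname{supp}(f)=\{x:f(x)\neq0\}$ and $\operatorname{supp}(g)=\{x:g(x)\neq0\}$ is infinite. Then for every subset $S\subset P$ with $1\leqslant |S|\leqslant 2$, there exists $z\in S$ such that there are infinitely many $x\in P$ with $x\geqslant z$ but $x\not\geqslant y$ for every $y\in S\setminus\{z\}$.
   Context: A poset is locally finite if every interval $\{z: x\leqslant z\leqslant y\}$ is finite. *)

From HB Require Import structures.
From mathcomp Require Import all_boot all_order all_algebra.
From mathcomp Require Import boolp classical_sets functions cardinality fsbigop reals.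
From mathcomp Require Import complex.
Set Implicit Arguments. Unset Strict Implicit. Unset Printing Implicit Defensive.
Import Order.TTheory GRing.Theory Num.Theory.
Local Open Scope classical_set_scope.
Local Open Scope ring_scope.

Definition locally_finite {d} (P : porderType d) : Prop :=
  forall x y : P, finite_set [set z : P | (x <= z)%O /\ (z <= y)%O].

Definition has_minimum {d} (P : porderType d) : Prop :=
  exists m : P, forall x : P, (m <= x)%O.

Definition supp {T : Type} {R : realType} (f : T -> R[i]) : set T :=
  [set x | f x != 0].

(** The sum over the (finite, by local
    finiteness and existence of a minimum) down-set {x | x <= z} is the
    finitely supported sum of fsbigop. *)
Definition mobius_uncertainty {d} (P : porderType d) (R : realType) : Prop :=
  forall f g : P -> R[i],
    (exists x, f x != 0) -> (exists x, g x != 0) ->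
    (forall z : P, g z = \sum_(x \in [set x : P | (x <= z)%O]) f x) ->
    ~ finite_set (supp f) \/ ~ finite_set (supp g).

From HB Require Import structures.
From mathcomp Require Import all_boot all_order all_algebra.
From mathcomp Require Import boolp classical_sets functions cardinality fsbigop reals.
From mathcomp Require Import complex.
Import Order.TTheory GRing.Theory Num.Theory.
Local Open Scope classical_set_scope.

(* Test the zeta transform against f = delta_a - delta_b (just delta_a when
   a = b): f has finite support, and its transform z |-> [a <= z] - [b <= z]
   is supported exactly where z lies above one of a, b but not the other.
   Uncertainty makes this support infinite, so one of the two "exclusive"
   up-sets {x | a <= x, ~ b <= x}, {x | b <= x, ~ a <= x} is infinite. *)

Local Open Scope ring_scope.

Lemma fsum_delta (T : choiceType) (V : pzSemiRingType) (c : T) (D : set T) :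
  \sum_(x \in D) ((x == c)%:R : V) = (`[< D c >])%:R.
Proof.
have [Dc|Dc] := pselect (D c); last first.
  by rewrite asboolF // fsbig1 // => x Dx; case: eqP => // xc; case: Dc; rewrite -xc.
rewrite asboolT // -(fsbig_widen [set c] D) ?fsbig_set1 ?eqxx //; first by move=> x ->.
by move=> x [_ /= xc]; rewrite /preimage /=; case: eqP.
Qed.

Lemma fsumrB (T : choiceType) (V : zmodType) (D : set T) (F G : T -> V) :
  finite_set D ->
  \sum_(x \in D) (F x - G x) = \sum_(x \in D) F x - \sum_(x \in D) G x.
Proof. by move=> finD; rewrite !fsbig_finite // sumrB. Qed.

Section Poset.
Context {d : Order.disp_t} {P : porderType d}.

Lemma finite_down_set : locally_finite P -> has_minimum P ->
  forall z : P, finite_set [set x : P | (x <= z)%O].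
Proof.
move=> hlf [m hm] z.
suff -> : [set x : P | (x <= z)%O] = [set x | (m <= x)%O /\ (x <= z)%O] by [].
by rewrite predeqE => x; split => [|[]//]; split.
Qed.

Lemma up_set_separates {a b : P} : a != b -> exists x : P, (a <= x)%O != (b <= x)%O.
Proof.
move=> ab; have [ba|nba] := boolP (b <= a)%O; last by exists a; rewrite lexx.
exists b; rewrite lexx; apply: contra_neq ab => ab'.
by apply: le_anti; rewrite ab' ba.
Qed.

Context {R : realType} (hmu : mobius_uncertainty P R).

Lemma zeta_supp_infinite (f g : P -> R[i]) :
  (exists x, f x != 0) -> finite_set (supp f) -> (exists x, g x != 0) ->
  (forall z : P, g z = \sum_(x \in [set x : P | (x <= z)%O]) f x) ->
  ~ finite_set (supp g).
Proof. by move=> f0 finf g0 /(hmu _ _ f0 g0) []. Qed.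

Lemma up_set_infinite (a : P) : ~ finite_set [set x : P | (a <= x)%O].
Proof.
have -> : [set x : P | (a <= x)%O] = supp (fun z : P => (a <= z)%O%:R : R[i]).
  by rewrite predeqE => x; rewrite /supp /=; case: (a <= x)%O; rewrite ?oner_neq0 ?eqxx.
apply: (zeta_supp_infinite (fun x : P => (x == a)%:R)).
- by exists a; rewrite eqxx oner_neq0.
- apply: sub_finite_set (finite_set1 a) => x; rewrite /supp /=.
  by case: (eqVneq x a) => // _; rewrite eqxx.
- by exists a; rewrite lexx oner_neq0.
- by move=> z; rewrite fsum_delta /= asboolb.
Qed.

Lemma up_set_symdiff_infinite {a b : P} :
  locally_finite P -> has_minimum P -> a != b ->
  ~ finite_set [set x : P | (a <= x)%O != (b <= x)%O].
Proof.
move=> hlf hmin ab.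
have -> : [set x : P | (a <= x)%O != (b <= x)%O] =
    supp (fun z : P => (a <= z)%O%:R - (b <= z)%O%:R : R[i]).
  rewrite predeqE => x; rewrite /supp /= subr_eq0 eqr_nat.
  by case: (a <= x)%O; case: (b <= x)%O.
apply: (zeta_supp_infinite (fun x : P => (x == a)%:R - (x == b)%:R)).
- by exists a; rewrite eqxx (negbTE ab) subr0 oner_neq0.
- apply: (@sub_finite_set _ _ ([set a] `|` [set b])); last first.
    by rewrite finite_setU; split; apply: finite_set1.
  move=> x; rewrite /supp /=.
  case: (eqVneq x a) => [->|_]; first by left.
  by case: (eqVneq x b) => [->|_]; [right | rewrite subrr eqxx].
- have [x ax] := up_set_separates ab.
  by exists x; rewrite subr_eq0 eqr_nat; case: (a <= x)%O ax; case: (b <= x)%O.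
- move=> z; rewrite fsumrB ?(fsum_delta P R[i]) /= ?asboolb //.
  exact: finite_down_set.
Qed.

End Poset.

Theorem theorem1p4 (R : realType) (d : Order.disp_t) (P : porderType d)
  (hlf : locally_finite P) (hmin : has_minimum P)
  (hmu : mobius_uncertainty P R) :
  forall S : set P, (exists a b : P, S = [set a; b]) ->
    exists2 z : P, S z &
      ~ finite_set [set x : P | (z <= x)%O /\
                      (forall y : P, S y -> y <> z -> ~ (y <= x)%O)].
Proof.
move=> S [a [b ->]]; apply: contrapT => hfin.
pose excl (z : P) := [set x : P | (z <= x)%O /\
                        (forall y : P, [set a; b] y -> y <> z -> ~ (y <= x)%O)].
have fin z : [set a; b] z -> finite_set (excl z).
  by move=> Sz; apply: contrapT => inf; apply: hfin; exists z.
have [a_eq_b | ab] := eqVneq a b.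
  apply: (up_set_infinite hmu a); apply: (sub_finite_set _ (fin a _)); last by left.
  by move=> x ax; split=> // y [] -> //; rewrite -a_eq_b.
apply: (up_set_symdiff_infinite hmu hlf hmin ab).
apply: (@sub_finite_set _ _ (excl a `|` excl b)).
  move=> x; rewrite /excl /=.
  case: (boolP (a <= x)%O) => ax; case: (boolP (b <= x)%O) => bx //= _.
  - by left; split=> // y [] -> // _; apply/negP.
  - by right; split=> // y [] -> // _; apply/negP.
by rewrite finite_setU; split; apply: fin; [left | right].
Qed.
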